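(* Let $D=0.5$ and let $p_0,p_1,\dots,p_{N_p}$ be the PWM basis functions on $[0,1]$ defined in the context. Then for every $k=1,\dots,N_p$ and every $\tau\in(0,0.5)$, $$-p_k(\tau)=p_k(\tau+0.5).$$
   Context: The PWM basis functions with duty cycle $D\in(0,1)$ are functions of the relative time $\tau\in[0,1]$, defined recursively as follows. Set $p_0(\tau)=1$ on $[0,1]$, and $$p_1(\tau)=\begin{cases}\sqrt3\,\dfrac{2\tau-D}{D}, & 0\le\tau\le D,\\[2mm] \sqrt3\,\dfrac{1+D-2\tau}{1-D}, & D\le\tau\le 1.\end{cases}$$ For $k\ge2$, define $p_k^\star(\tau)=\int_D^\tau p_{k-1}(\tau')\,d\tau'$, then $$\overline p_k(\tau)=p_k^\star(\tau)-\sum_{l=0}^{k-1}p_l(\tau)\int_0^1 p_l(s)\,p_k^\star(s)\,ds,\qquad p_k(\tau)=\frac{\overline p_k(\tau)}{\left(\int_0^1\overline p_k(s)^2\,ds\right)^{1/2}}$$ (Gram–Schmidt orthonormalization in $L^2([0,1])$). For $D=0.5$, $p_1(\tau)=\sqrt3(4\tau-1)$ on $[0,0.5)$ and $p_1(\tau)=\sqrt3(3-4\tau)$ on $[0.5,1]$. *)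

From Stdlib Require Import Reals List ClassicalEpsilon.
Import ListNotations.
Open Scope R_scope.

(* Oriented Riemann integral of f from a to b (Stdlib's RiemannInt, which is
   independent of the integrability proof); 0 if f is not Riemann integrable
   (never the case for the piecewise-polynomial functions below). *)
Definition Rint (f : R -> R) (a b : R) : R :=
  match excluded_middle_informative (inhabited (Riemann_integrable f a b)) with
  | left H => RiemannInt (epsilon H (fun _ => True))
  | right _ => 0
  end.

Definition pwm_p0 : R -> R := fun _ => 1.

Definition pwm_p1 (D : R) : R -> R := fun tau =>
  if Rle_dec tau D then sqrt 3 * ((2 * tau - D) / D)
  else sqrt 3 * ((1 + D - 2 * tau) / (1 - D)).

(* Given L = [p_0; ...; p_{k-1}], compute p_k (k >= 2):
   p_k^* (tau) = int_D^tau p_{k-1},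
   pbar_k = p_k^* - sum_l p_l <p_l, p_k^*>,  p_k = pbar_k / ||pbar_k||. *)
Definition pwm_next (D : R) (L : list (R -> R)) : R -> R :=
  let pprev := last L (fun _ => 0) in
  let pstar := fun tau => Rint pprev D tau in
  let pbar := fun tau =>
    pstar tau - fold_right (fun pl acc =>
        pl tau * Rint (fun s => pl s * pstar s) 0 1 + acc) 0 L in
  let nrm := sqrt (Rint (fun s => pbar s ^ 2) 0 1) in
  fun tau => pbar tau / nrm.

Fixpoint pwm_list (D : R) (n : nat) : list (R -> R) :=
  match n with
  | O => [pwm_p0]
  | S m =>
      match m with
      | O => [pwm_p0; pwm_p1 D]
      | S _ => let L := pwm_list D m in L ++ [pwm_next D L]
      end
  end.

Definition pwm (D : R) (k : nat) : R -> R := nth k (pwm_list D k) (fun _ => 0).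

From Stdlib Require Import Reals List Lra Lia ClassicalEpsilon.
From Coquelicot Require Import Coquelicot.
Import ListNotations.
Open Scope R_scope.

(* Every p_k with k >= 1 is continuous and satisfies f (t + 1/2) = - f t on
   [0, 1/2].  This holds for p_1 and survives each step of the recursion: the
   primitive P t = int_(1/2)^t p of such a p satisfies P (t + 1/2) = P 0 - P t,
   so P - P 0 / 2 has the property again, and P 0 / 2 is precisely the mean of
   P over [0, 1], i.e. the Gram-Schmidt correction along p_0 = 1.  The other
   corrections are multiples of p_1, ..., p_(k-1), and normalising divides by
   a constant. *)

Definition half_antiperiodic (h : R) (f : R -> R) : Prop :=
  forall t, 0 <= t <= h -> f (t + h) = - f t.

Lemma ex_RInt_continuous_R (f : R -> R) (a b : R) :
  (forall x, continuous f x) -> ex_RInt f a b.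
Proof. intro Cf; apply (@ex_RInt_continuous R_CompleteNormedModule); auto. Qed.

Lemma Rint_RInt (f : R -> R) (a b : R) :
  (forall x, continuous f x) -> Rint f a b = RInt f a b.
Proof.
  intro Cf; unfold Rint.
  destruct excluded_middle_informative as [_Hex | Hnot].
  - symmetry; apply RInt_Reals.
  - exfalso; apply Hnot; constructor.
    apply ex_RInt_Reals_0, ex_RInt_continuous_R, Cf.
Qed.

Lemma continuous_primitive (f : R -> R) (a : R) :
  (forall x, continuous f x) -> forall x, continuous (fun t => RInt f a t) x.
Proof.
  intros Cf x; apply (@ex_derive_continuous R_AbsRing R_NormedModule).
  exists (f x); apply (@is_derive_RInt R_NormedModule f _ a); [|apply Cf].
  apply filter_forall; intro b.
  apply (@RInt_correct R_CompleteNormedModule), ex_RInt_continuous_R, Cf.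
Qed.

Lemma RInt_shift (f : R -> R) (a b c : R) : (forall x, continuous f x) ->
  RInt (fun s => f (s + c)) a b = RInt f (a + c) (b + c).
Proof.
  intro Cf.
  replace (a + c) with (1 * a + c) by ring; replace (b + c) with (1 * b + c) by ring.
  rewrite <- (@RInt_comp_lin R_CompleteNormedModule) by apply ex_RInt_continuous_R, Cf.
  apply (@RInt_ext R_CompleteNormedModule); intros x _.
  replace (1 * x + c) with (x + c) by ring.
  symmetry; apply (@scal_one R_Ring R_ModuleSpace).
Qed.

Lemma RInt_half_antiperiodic (h : R) (p : R -> R) :
  (forall x, continuous p x) -> half_antiperiodic h p ->
  forall t, 0 <= t <= h -> RInt p h (t + h) = RInt p h 0 - RInt p h t.
Proof.
  intros Cp Ap t Ht.
  assert (Ip : forall a b, ex_RInt p a b) by (intros; apply ex_RInt_continuous_R, Cp).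
  replace (RInt p h (t + h)) with (RInt p (0 + h) (t + h))
    by (rewrite Rplus_0_l; reflexivity).
  rewrite <- RInt_shift by exact Cp.
  rewrite (@RInt_ext R_CompleteNormedModule _ (fun s => opp (p s))).
  2:{ intros x Hx; rewrite Rmin_left, Rmax_right in Hx by lra; apply Ap; lra. }
  rewrite (@RInt_opp R_CompleteNormedModule) by apply Ip.
  rewrite <- (@RInt_Chasles R_CompleteNormedModule p h 0 t) by apply Ip.
  unfold opp, plus; simpl; ring.
Qed.

Lemma RInt_full_period (h : R) (P : R -> R) : 0 <= h ->
  (forall x, continuous P x) ->
  (forall t, 0 <= t <= h -> P (t + h) = P 0 - P t) ->
  RInt P 0 (2 * h) = h * P 0.
Proof.
  intros Hh CP AP.
  assert (IP : forall a b, ex_RInt P a b) by (intros; apply ex_RInt_continuous_R, CP).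
  rewrite <- (@RInt_Chasles R_CompleteNormedModule P 0 h) by apply IP.
  replace (RInt P h (2 * h)) with (RInt P (0 + h) (h + h)) by (f_equal; ring).
  rewrite <- RInt_shift by exact CP.
  rewrite (@RInt_ext R_CompleteNormedModule (fun s => P (s + h))
    (fun s => minus (P 0) (P s))).
  2:{ intros x Hx; rewrite Rmin_left, Rmax_right in Hx by lra; apply AP; lra. }
  rewrite (@RInt_minus R_CompleteNormedModule) by (apply IP || apply ex_RInt_const).
  rewrite (@RInt_const R_CompleteNormedModule).
  unfold minus, opp, scal, plus; simpl; unfold mult; simpl; ring.
Qed.

Section LinearCombination.

Variable c : (R -> R) -> R.

Definition lincomb (L : list (R -> R)) (t : R) : R :=
  fold_right (fun pl acc => pl t * c pl + acc) 0 L.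

Lemma continuous_lincomb (L : list (R -> R)) :
  List.Forall (fun f : R -> R => forall x : R, continuous f x) L ->
  forall x, continuous (lincomb L) x.
Proof.
  induction 1 as [|f L Cf _ IH]; intro x; simpl.
  - apply continuous_const.
  - apply (@continuous_plus _ _ R_NormedModule); [|apply IH].
    apply (@continuous_mult _ R_AbsRing); [apply Cf | apply continuous_const].
Qed.

Lemma half_antiperiodic_lincomb (h : R) (L : list (R -> R)) :
  List.Forall (half_antiperiodic h) L -> half_antiperiodic h (lincomb L).
Proof.
  induction 1 as [|f L Af _ IH]; intros t Ht; simpl; [lra|].
  fold (lincomb L t) (lincomb L (t + h)); rewrite Af, IH by exact Ht; ring.
Qed.

End LinearCombination.

Definition continuous_half_antiperiodic (f : R -> R) : Prop :=
  (forall x, continuous f x) /\ half_antiperiodic (1/2) f.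

Lemma pwm_p1_continuous_half_antiperiodic :
  continuous_half_antiperiodic (pwm_p1 (1/2)).
Proof.
  assert (p1_abs : forall t, sqrt 3 * (1 - 4 * Rabs (t - 1/2)) = pwm_p1 (1/2) t).
  { intro t; unfold pwm_p1; destruct (Rle_dec t (1/2)).
    - rewrite Rabs_left1 by lra; field.
    - rewrite Rabs_right by lra; field. }
  split.
  - intro x; apply (continuous_ext _ _ _ p1_abs).
    apply (@continuous_mult _ R_AbsRing); [apply continuous_const|].
    apply (@continuous_minus _ _ R_NormedModule); [apply continuous_const|].
    apply (@continuous_mult _ R_AbsRing); [apply continuous_const|].
    apply continuous_Rabs_comp, (@continuous_minus _ _ R_NormedModule).
    + apply continuous_id.
    + apply continuous_const.
  - intros t Ht; rewrite <- !p1_abs.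
    rewrite Rabs_right, Rabs_left1 by lra; field.
Qed.

Lemma last_cons_In {A : Type} (x d : A) (M : list A) :
  M <> [] -> In (last (x :: M) d) M.
Proof.
  intro HM; destruct (exists_last HM) as [l [a ->]].
  rewrite app_comm_cons, last_last; apply in_or_app; right; left; reflexivity.
Qed.

Lemma pwm_next_continuous_half_antiperiodic (M : list (R -> R)) :
  M <> [] -> List.Forall continuous_half_antiperiodic M ->
  continuous_half_antiperiodic (pwm_next (1/2) (pwm_p0 :: M)).
Proof.
  intros HM HA.
  set (p := last (pwm_p0 :: M) (fun _ => 0)).
  assert (Hp : continuous_half_antiperiodic p).
  { rewrite Forall_forall in HA; apply HA, last_cons_In, HM. }
  destruct Hp as [Cp Ap].
  set (P := fun t => RInt p (1/2) t).
  assert (CP : forall x, continuous P x) by (apply continuous_primitive, Cp).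
  assert (Rint_P : forall t, Rint p (1/2) t = P t) by (intro; apply Rint_RInt, Cp).
  assert (AP : forall t, 0 <= t <= 1/2 -> P (t + 1/2) = P 0 - P t)
    by (apply RInt_half_antiperiodic; assumption).
  assert (mean_P : Rint (fun s => pwm_p0 s * Rint p (1/2) s) 0 1 = P 0 / 2).
  { rewrite Rint_RInt.
    - rewrite (@RInt_ext R_CompleteNormedModule _ P).
      + replace (RInt P 0 1) with (RInt P 0 (2 * (1/2))) by (f_equal; field).
        rewrite RInt_full_period by (assumption || lra); field.
      + intros; unfold pwm_p0; rewrite Rint_P; apply Rmult_1_l.
    - intro x; apply (continuous_ext P); [|apply CP].
      intro; unfold pwm_p0; rewrite Rint_P; symmetry; apply Rmult_1_l. }
  set (c := fun pl => Rint (fun s => pl s * Rint p (1/2) s) 0 1).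
  assert (CM : List.Forall (fun f : R -> R => forall x : R, continuous f x) M)
    by exact (Forall_impl _ (fun f (Hf : continuous_half_antiperiodic f) => proj1 Hf) HA).
  assert (AM : List.Forall (half_antiperiodic (1/2)) M)
    by exact (Forall_impl _ (fun f (Hf : continuous_half_antiperiodic f) => proj2 Hf) HA).
  assert (pbar_eq : forall t, Rint p (1/2) t - fold_right
      (fun pl acc => pl t * c pl + acc) 0 (pwm_p0 :: M) = P t - P 0 / 2 - lincomb c M t).
  { intro t; simpl; fold (lincomb c M t); unfold c at 1; rewrite mean_P, Rint_P.
    unfold pwm_p0; ring. }
  unfold pwm_next; fold p c; set (nrm := sqrt _); split.
  - intro x; apply (continuous_ext (fun t => (P t - P 0 / 2 - lincomb c M t) / nrm)).
    { intro t; rewrite pbar_eq; reflexivity. }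
    apply (@continuous_mult _ R_AbsRing); [|apply continuous_const].
    apply (@continuous_minus _ _ R_NormedModule); [|apply continuous_lincomb, CM].
    apply (@continuous_minus _ _ R_NormedModule); [apply CP | apply continuous_const].
  - intros t Ht; rewrite !pbar_eq, AP, (half_antiperiodic_lincomb c) by assumption.
    rewrite <- Rdiv_opp_l; f_equal; lra.
Qed.

Lemma pwm_list_SS (D : R) (m : nat) :
  pwm_list D (S (S m)) = pwm_list D (S m) ++ [pwm_next D (pwm_list D (S m))].
Proof. reflexivity. Qed.

Lemma pwm_list_length (D : R) (n : nat) : length (pwm_list D n) = S n.
Proof.
  induction n as [|[|n] IH]; try reflexivity.
  rewrite pwm_list_SS, length_app, IH; simpl; lia.
Qed.

Lemma pwm_eq_last (D : R) (n : nat) : pwm D n = last (pwm_list D n) (fun _ => 0).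
Proof.
  destruct n as [|[|m]]; try reflexivity.
  unfold pwm; rewrite pwm_list_SS, last_last, <- (pwm_list_length D (S m)).
  apply nth_middle.
Qed.

Lemma pwm_list_continuous_half_antiperiodic (m : nat) : exists M,
  pwm_list (1/2) (S m) = pwm_p0 :: M /\ M <> [] /\
  List.Forall continuous_half_antiperiodic M.
Proof.
  induction m as [|m [M [E [HM HA]]]].
  - exists [pwm_p1 (1/2)]; repeat split; [discriminate|].
    constructor; [apply pwm_p1_continuous_half_antiperiodic | constructor].
  - exists (M ++ [pwm_next (1/2) (pwm_p0 :: M)]); repeat split.
    + rewrite pwm_list_SS, E; reflexivity.
    + intro Hnil; destruct M; discriminate.
    + apply Forall_app; split; [exact HA|].
      constructor; [|constructor].
      apply pwm_next_continuous_half_antiperiodic; assumption.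
Qed.

Theorem theorem1 (Np k : nat) (tau : R) :
  (1 <= k)%nat -> (k <= Np)%nat -> 0 < tau < (1/2) ->
  - pwm (1/2) k tau = pwm (1/2) k (tau + (1/2)).
Proof.
  intros Hk _ Htau; destruct k as [|m]; [lia|].
  destruct (pwm_list_continuous_half_antiperiodic m) as [M [E [HM HA]]].
  rewrite pwm_eq_last, E.
  rewrite Forall_forall in HA.
  destruct (HA _ (last_cons_In pwm_p0 (fun _ => 0) M HM)) as [_ Ahalf].
  rewrite Ahalf by lra; reflexivity.
Qed.
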